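(* There is a universal constant $C$ such that for every $K$, $T$, every sequence of multiclass outcomes $\mathbf x\in[K]^T$ fixed in advance, and every bounded proper multiclass scoring rule $\ell\in\mathcal L$, the forecasts $\mathbf p$ produced by ForecastFTPL satisfy $\mathbb E[\mathrm{Reg}_\ell(\mathbf p,\mathbf x)]\le CK\sqrt T$, i.e. $O(K\sqrt T)$.
   Context: ForecastFTPL: for $t=1,\dots,T$: for each $i\in[K]$ sample $n_{t,i}$ independently and uniformly from $\{0,1,\dots,\lfloor\sqrt T\rfloor\}$; set $\hat X_{t,i}=n_{t,i}+\sum_{s=1}^{t-1}\mathbf 1(x_s=i)$; output $p_t\in\Delta_K$ with $p_{t,i}=\hat X_{t,i}/\sum_{j=1}^K\hat X_{t,j}$ (if the denominator is $0$, output an arbitrary fixed element of $\Delta_K$); then observe $x_t$. Here $\Delta_K$ is the probability simplex in $\mathbb R^K$, outcome $i$ identified with $e_i$. A multiclass scoring rule $\ell:\Delta_K\times[K]\to\mathbb R$, with $\ell(p;q)=\sum_iq_i\ell(p,i)$, is proper if $\ell(p;p)\le\ell(p';p)$ for all $p,p'$; $\mathcal L$ is the set of proper ones with values in $[-1,1]$. With $\beta=\frac1T\sum_te_{x_t}$, $\mathrm{Reg}_\ell(\mathbf p,\mathbf x)=\sum_t\ell(p_t,x_t)-\sum_t\ell(\beta,x_t)$. *)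

From mathcomp Require Import all_boot all_order all_algebra.
From mathcomp Require Import reals.
Set Implicit Arguments. Unset Strict Implicit. Unset Printing Implicit Defensive.
Import Order.TTheory GRing.Theory Num.Theory.
Local Open Scope ring_scope.

Section Defs.
Variable R : realType.

(* The probability simplex Delta_K; outcome i is identified with e_i. *)
Definition in_simplex (K : nat) (p : {ffun 'I_K -> R}) : Prop :=
  (forall i, 0 <= p i) /\ \sum_(i < K) p i = 1.

Definition score_exp (K : nat) (l : {ffun 'I_K -> R} -> 'I_K -> R)
  (p q : {ffun 'I_K -> R}) : R := \sum_(i < K) q i * l p i.

Definition proper (K : nat) (l : {ffun 'I_K -> R} -> 'I_K -> R) : Prop :=
  forall p p', in_simplex p -> in_simplex p' ->
    score_exp l p p <= score_exp l p' p.

Definition bounded_proper (K : nat) (l : {ffun 'I_K -> R} -> 'I_K -> R) : Prop :=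
  proper l /\ forall p i, in_simplex p -> -1 <= l p i <= 1.

Definition sqrtT (T : nat) : nat := Nat.sqrt T.

Definition noise (T K : nat) := {ffun 'I_T * 'I_K -> 'I_(sqrtT T).+1}.

Definition cnt (T K : nat) (x : 'I_T -> 'I_K) (t : nat) (i : 'I_K) : nat :=
  \sum_(s < T | (s < t)%N) (x s == i).

Definition Xhat (T K : nat) (x : 'I_T -> 'I_K) (n : noise T K) (t : 'I_T)
  (i : 'I_K) : nat := (n (t, i) + cnt x t i)%N.

Definition ftpl_forecast (T K : nat) (p0 : {ffun 'I_K -> R})
  (x : 'I_T -> 'I_K) (n : noise T K) (t : 'I_T) : {ffun 'I_K -> R} :=
  let D := \sum_(j < K) Xhat x n t j in
  if D == 0%N then p0 else [ffun i => (Xhat x n t i)%:R / D%:R].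

Definition beta (T K : nat) (x : 'I_T -> 'I_K) : {ffun 'I_K -> R} :=
  [ffun i => (\sum_(t < T) (x t == i))%:R / T%:R].

Definition regret (T K : nat) (l : {ffun 'I_K -> R} -> 'I_K -> R)
  (p : 'I_T -> {ffun 'I_K -> R}) (x : 'I_T -> 'I_K) : R :=
  \sum_(t < T) l (p t) (x t) - \sum_(t < T) l (beta x) (x t).

(* Expected regret of ForecastFTPL: the n_{t,i} are independent and uniform,
   so the expectation is the uniform average over all noise arrays. *)
Definition exp_regret_ftpl (T K : nat) (p0 : {ffun 'I_K -> R})
  (l : {ffun 'I_K -> R} -> 'I_K -> R) (x : 'I_T -> 'I_K) : R :=
  (\sum_(n : noise T K) regret l (ftpl_forecast p0 x n) x)
    / #|{: noise T K}|%:R.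

End Defs.

From mathcomp Require Import all_boot all_order all_algebra perm.
From mathcomp Require Import reals lra ring.
From Stdlib Require Import PeanoNat.
Set Implicit Arguments. Unset Strict Implicit. Unset Printing Implicit Defensive.
Import Order.TTheory GRing.Theory Num.Theory.
Local Open Scope ring_scope.

(* The expected loss of a round depends only on the law of the
   noise row used in that round, and the rows are identically distributed, so
   we may use one row w at every round.  For a fixed w the forecast of round t
   is the normalised count vector w + counts(<t), which by properness
   minimises the cumulative loss of those counts over the simplex; the
   be-the-leader argument then bounds the regret of the forecasts shifted by
   one round by 2 |w| <= 2 K sqrt T.  The shift itself costs at most
   2 / (sqrt T + 1) per round in expectation: adding e_{x_t} to the counts is
   the same as increasing one uniform coordinate of w by one, and summing over
   that coordinate telescopes. *)

Lemma be_the_leader (R : numDomainType) (P : Type) (S : P -> Prop)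
    (F : nat -> P -> R) (a : nat -> P) (n : nat) (p : P) :
  (forall t, S (a t)) -> (forall t q, S q -> F t (a t) <= F t q) -> S p ->
  \sum_(t < n) (F t.+1 (a t.+1) - F t (a t.+1)) <= F n p - F 0 (a 0).
Proof.
move=> Sa a_min Sp.
apply: le_trans (_ : \sum_(t < n) (F t.+1 (a t.+1) - F t (a t)) <= _).
  by apply: ler_sum => t _; rewrite lerD2l lerN2 a_min.
rewrite -(big_mkord xpredT (fun t => F t.+1 (a t.+1) - F t (a t))).
by rewrite telescope_sumr // lerD2r a_min.
Qed.

Lemma big_ord_lt_succ (A : Type) (idx : A) (op : Monoid.com_law idx) (n : nat)
    (t : 'I_n) (F : 'I_n -> A) :
  \big[op/idx]_(s < n | (s < t.+1)%N) F s
  = op (\big[op/idx]_(s < n | (s < t)%N) F s) (F t).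
Proof.
rewrite (bigD1 t) ?ltnSn //= Monoid.mulmC; congr (op _ _).
by apply: eq_bigl => s; rewrite ltnS andbC -ltn_neqAle.
Qed.

Section FfunSums.
Variable R : realFieldType.

Lemma sum_ffun_comp_bij (A V : finType) (s : A -> A) (F : {ffun A -> V} -> R) :
  bijective s ->
  \sum_(n : {ffun A -> V}) F n = \sum_(n : {ffun A -> V}) F [ffun a => n (s a)].
Proof.
case=> s' sK s'K; apply: reindex_inj => n n' /ffunP eq_nn'.
by apply/ffunP => a; have := eq_nn' (s' a); rewrite !ffunE s'K.
Qed.

Definition ffun_upd (I V : finType) (n : {ffun I -> V}) (e : I) (a : V) :=
  [ffun j => if j == e then a else n j].

Lemma sum_ffun_split_coord (I V : finType) (e : I) (v0 : V)
    (F : {ffun I -> V} -> R) :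
  \sum_(n : {ffun I -> V}) F n
  = \sum_(n : {ffun I -> V} | n e == v0) \sum_(a : V) F (ffun_upd n e a).
Proof.
rewrite (partition_big (fun n : {ffun I -> V} => n e) xpredT) //= exchange_big.
apply: eq_bigr => a _.
rewrite (reindex_onto (fun n => ffun_upd n e a) (fun n => ffun_upd n e v0)) /=.
  apply: eq_bigl => n; rewrite ffunE !eqxx /=.
  apply/eqP/eqP => [<-|n_e]; first by rewrite ffunE eqxx.
  by apply/ffunP => j; rewrite !ffunE; case: (j =P e) => [->|].
move=> n /eqP n_e; apply/ffunP => j; rewrite !ffunE.
by case: (j =P e) => [->|].
Qed.

Definition ffun_val (I : finType) (m : nat) (n : {ffun I -> 'I_m}) :
  {ffun I -> nat} := [ffun j => nat_of_ord (n j)].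

Definition ffun_incr (I : finType) (e : I) (u : {ffun I -> nat}) :
  {ffun I -> nat} := [ffun j => (u j + (j == e))%N].

(* Summing over the coordinate [e] turns the differences into a telescoping
   sum whose two end terms are bounded by 1. *)
Lemma sum_incr_coord_le (I : finType) (m : nat) (e : I)
    (h : {ffun I -> nat} -> R) :
  (forall u, -1 <= h u <= 1) ->
  \sum_(n : {ffun I -> 'I_m.+1}) (h (ffun_val n) - h (ffun_incr e (ffun_val n)))
  <= 2 * #|{: {ffun I -> 'I_m.+1}}|%:R / m.+1%:R.
Proof.
move=> h_bound.
pose v (n : {ffun I -> 'I_m.+1}) (k : nat) : {ffun I -> nat} :=
  [ffun j => if j == e then k else nat_of_ord (n j)].
have val_upd n (a : 'I_m.+1) : ffun_val (ffun_upd n e a) = v n a.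
  by apply/ffunP => j; rewrite !ffunE; case: (j == e).
have incr_v n k : ffun_incr e (v n k) = v n k.+1.
  apply/ffunP => j; rewrite !ffunE.
  by case: (j == e); rewrite ?addn1 ?addn0.
have card_split : (#|{: {ffun I -> 'I_m.+1}}|%:R : R)
    = \sum_(n : {ffun I -> 'I_m.+1} | n e == ord0) m.+1%:R.
  rewrite -sumr_const (sum_ffun_split_coord e ord0); apply: eq_bigr => n _.
  by rewrite sumr_const card_ord.
rewrite (sum_ffun_split_coord e ord0) card_split mulr_sumr mulr_suml.
apply: ler_sum => n _.
rewrite mulfK ?pnatr_eq0 //.
under eq_bigr do rewrite val_upd incr_v.
rewrite -(big_mkord xpredT (fun k => h (v n k) - h (v n k.+1))).
rewrite (telescope_sumr_eq (fun k => - h (v n k))) => [|//|k _]; last first.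
  by rewrite opprK addrC.
have /andP[? ?] := h_bound (v n 0); have /andP[? ?] := h_bound (v n m.+1).
lra.
Qed.

End FfunSums.

Section ProperScoring.
Variables (R : realType) (K : nat) (l : {ffun 'I_K -> R} -> 'I_K -> R)
  (p0 : {ffun 'I_K -> R}).

Definition normalized (c : 'I_K -> nat) : {ffun 'I_K -> R} :=
  let D := (\sum_(j < K) c j)%N in
  if D == 0%N then p0 else [ffun i => (c i)%:R / D%:R].

Definition weighted_loss (c : 'I_K -> nat) (p : {ffun 'I_K -> R}) : R :=
  \sum_(i < K) (c i)%:R * l p i.

Lemma eq_normalized c c' : c =1 c' -> normalized c = normalized c'.
Proof.
move=> eq_c; rewrite /normalized (eq_bigr _ (fun j _ => eq_c j)).
by congr (if _ then _ else _); apply: eq_ffun => i; rewrite eq_c.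
Qed.

Lemma normalized_simplex c : in_simplex p0 -> in_simplex (normalized c).
Proof.
rewrite /normalized; case: eqP => [_|D_neq0] // _; split.
- by move=> i; rewrite ffunE divr_ge0.
- under eq_bigr do rewrite ffunE.
  by rewrite -mulr_suml -natr_sum mulfV // pnatr_eq0; apply/eqP.
Qed.

Lemma weighted_loss_bound c p : bounded_proper l -> in_simplex p ->
  `|weighted_loss c p| <= (\sum_(i < K) c i)%:R.
Proof.
move=> [_ l_bound] p_simplex; rewrite natr_sum.
apply: le_trans (ler_norm_sum _ _ _) _; apply: ler_sum => i _.
rewrite normrM ger0_norm // -[leRHS]mulr1 ler_wpM2l // ler_norml.
exact: l_bound.
Qed.

(* [weighted_loss c p] is [|c|] times the expected score of [p] under the
   distribution [c / |c|], so properness applies. *)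
Lemma normalized_min c p : in_simplex p0 -> bounded_proper l -> in_simplex p ->
  weighted_loss c (normalized c) <= weighted_loss c p.
Proof.
move=> p0_simplex [l_proper _] p_simplex.
have := normalized_simplex c p0_simplex.
rewrite /weighted_loss /normalized; case: eqP => [D_eq0|D_neq0] q_simplex.
  have c0 i : c i = 0%N.
    by apply/eqP; rewrite -leqn0 -D_eq0 (bigD1 i) //= leq_addr.
  by rewrite !big1 // => i _; rewrite c0 mul0r.
set D := (\sum_(j < K) c j)%N in D_neq0 q_simplex *.
set q := [ffun i => _] in q_simplex *.
have scoreE p' : \sum_(i < K) (c i)%:R * l p' i = D%:R * score_exp l p' q.
  rewrite /score_exp mulr_sumr; apply: eq_bigr => i _.
  by rewrite ffunE mulrA [D%:R * _]mulrC divfK // pnatr_eq0; apply/eqP.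
by rewrite !scoreE ler_wpM2l // l_proper.
Qed.

End ProperScoring.

Section ForecastFTPL.
Variables (R : realType) (K T : nat) (x : 'I_T -> 'I_K)
  (l : {ffun 'I_K -> R} -> 'I_K -> R) (p0 : {ffun 'I_K -> R}).
Hypotheses (p0_simplex : in_simplex p0) (l_bounded_proper : bounded_proper l).

Definition leader (t : nat) (w : 'I_K -> nat) : {ffun 'I_K -> R} :=
  normalized p0 (fun j => (w j + cnt x t j)%N).

Definition leader_loss (t : nat) (w : 'I_K -> nat) (p : {ffun 'I_K -> R}) : R :=
  weighted_loss l (fun j => (w j + cnt x t j)%N) p.

Lemma ftpl_forecastE (n : noise T K) t :
  ftpl_forecast p0 x n t = leader t (fun j => n (t, j)).
Proof. by []. Qed.

Lemma eq_leader t w w' : w =1 w' -> leader t w = leader t w'.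
Proof. by move=> eq_w; apply: eq_normalized => j; rewrite eq_w. Qed.

Lemma leader_simplex t w : in_simplex (leader t w).
Proof. exact: normalized_simplex. Qed.

Lemma leader_lossE t w p :
  leader_loss t w p = weighted_loss l w p + \sum_(s < T | (s < t)%N) l p (x s).
Proof.
rewrite /leader_loss /weighted_loss /cnt.
under eq_bigr do rewrite natrD mulrDl natr_sum mulr_suml.
rewrite big_split /= exchange_big /=; congr (_ + _); apply: eq_bigr => s _.
rewrite (bigD1 (x s)) //= eqxx mul1r big1 ?addr0 // => i /negbTE.
by rewrite eq_sym => ->; rewrite mul0r.
Qed.

Lemma leader_loss_succ (t : 'I_T) w p :
  leader_loss t.+1 w p - leader_loss t w p = l p (x t).
Proof. by rewrite !leader_lossE big_ord_lt_succ addrA [LHS]addrC addKr. Qed.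

Lemma leader_succE (t : 'I_T) w :
  leader t.+1 w = leader t (fun j => (w j + (j == x t))%N).
Proof.
apply: eq_normalized => j; rewrite /cnt big_ord_lt_succ /=.
by rewrite addnA addnAC [(x t == j)]eq_sym.
Qed.

Lemma beta_simplex : (0 < T)%N -> in_simplex (beta R x).
Proof.
move=> T_gt0; split=> [i|]; first by rewrite ffunE divr_ge0.
under eq_bigr do rewrite ffunE.
rewrite -mulr_suml -natr_sum exchange_big /=.
have -> : (\sum_(t < T) \sum_(i < K) (x t == i) = \sum_(t < T) 1)%N.
  apply: eq_bigr => t _; rewrite (bigD1 (x t)) //= eqxx big1 ?addn0 // => i.
  by rewrite eq_sym => /negbTE ->.
by rewrite sum1_card card_ord mulfV // pnatr_eq0 -lt0n.
Qed.

Lemma be_the_leader_ftpl w : (0 < T)%N ->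
  \sum_(t < T) l (leader t.+1 w) (x t)
  <= \sum_(t < T) l (beta R x) (x t) + 2 * (\sum_(i < K) w i)%:R.
Proof.
move=> T_gt0.
have /= := @be_the_leader R _ (@in_simplex R K) (leader_loss^~ w) (leader^~ w) T
  (beta R x) (leader_simplex^~ w)
  (fun t q q_simplex => normalized_min _ p0_simplex l_bounded_proper q_simplex)
  (beta_simplex T_gt0).
under eq_bigr do rewrite leader_loss_succ.
have lt_T (F : 'I_T -> R) : \sum_(s < T | (s < T)%N) F s = \sum_(s < T) F s.
  by apply: eq_bigl => s; rewrite ltn_ord.
rewrite leader_lossE lt_T => btl.
have := weighted_loss_bound w l_bounded_proper (beta_simplex T_gt0).
have := weighted_loss_bound (fun j => (w j + cnt x 0 j)%N) l_bounded_proper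
  (leader_simplex 0 w).
have -> : (\sum_(j < K) (w j + cnt x 0 j))%N = (\sum_(j < K) w j)%N.
  by apply: eq_bigr => j _; rewrite /cnt big_pred0 ?addn0.
rewrite !ler_norml => /andP[? ?] /andP[? ?].
move: btl; rewrite /leader_loss; lra.
Qed.

Local Notation m := (sqrtT T).
Local Notation N := #|{: noise T K}|.

Lemma sum_ftpl_loss_row (t t0 : 'I_T) :
  \sum_(n : noise T K) l (ftpl_forecast p0 x n t) (x t)
  = \sum_(n : noise T K) l (leader t (fun j => n (t0, j))) (x t).
Proof.
pose sw (q : 'I_T * 'I_K) := (tperm t t0 q.1, q.2).
have sw_bij : bijective sw by apply: inv_bij => -[a b]; rewrite /sw tpermK.
rewrite (sum_ffun_comp_bij _ sw_bij); apply: eq_bigr => n _.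
rewrite ftpl_forecastE; congr l.
by apply: eq_leader => j; rewrite ffunE /sw /= tpermL.
Qed.

Lemma sum_leader_succ_le (t t0 : 'I_T) :
  \sum_(n : noise T K) l (leader t (fun j => n (t0, j))) (x t)
  - \sum_(n : noise T K) l (leader t.+1 (fun j => n (t0, j))) (x t)
  <= 2 * N%:R / m.+1%:R.
Proof.
pose h (u : {ffun 'I_T * 'I_K -> nat}) :=
  l (leader t (fun j => u (t0, j))) (x t).
have h_bound u : -1 <= h u <= 1.
  by apply: l_bounded_proper.2; apply: leader_simplex.
apply: le_trans _ (sum_incr_coord_le m (t0, x t) h_bound); rewrite -sumrB.
apply: ler_sum => n _; rewrite /h leader_succE.
rewrite (@eq_leader t _ (fun j => ffun_val n (t0, j))) => [|j]; last first.
  by rewrite ffunE.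
rewrite (@eq_leader t (fun j => n (t0, j) + (j == x t))%N
  (fun j => ffun_incr (t0, x t) (ffun_val n) (t0, j))) //.
by move=> j; rewrite !ffunE xpair_eqE eqxx.
Qed.

Lemma sum_regret_ftpl_le : (0 < T)%N ->
  \sum_(n : noise T K) regret l (ftpl_forecast p0 x n) x
  <= N%:R * (2 * T%:R / m.+1%:R + 2 * (K * m)%:R).
Proof.
move=> T_gt0; pose t0 := Ordinal T_gt0.
pose B := \sum_(t < T) l (beta R x) (x t).
pose shifted (n : noise T K) :=
  \sum_(t < T) l (leader t.+1 (fun j => n (t0, j))) (x t).
have shift : \sum_(n : noise T K) regret l (ftpl_forecast p0 x n) x
    <= T%:R * (2 * N%:R / m.+1%:R) + \sum_(n : noise T K) (shifted n - B).
  have -> : T%:R * (2 * N%:R / m.+1%:R) = \sum_(t < T) 2 * N%:R / m.+1%:R :> R.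
    by rewrite sumr_const card_ord mulr_natl.
  rewrite /regret /shifted !sumrB -/B addrA lerD2r.
  rewrite exchange_big [X in _ <= _ + X]exchange_big -big_split /=.
  apply: ler_sum => t _.
  rewrite (sum_ftpl_loss_row t t0) -lerBlDr; exact: sum_leader_succ_le.
have btl (n : noise T K) : shifted n - B <= 2 * (K * m)%:R.
  rewrite lerBlDl; apply: le_trans (be_the_leader_ftpl _ T_gt0) _.
  rewrite lerD2l ler_wpM2l // ler_nat.
  apply: (@leq_trans (\sum_(i < K) m)); last by rewrite sum_nat_const card_ord.
  by apply: leq_sum => i _; rewrite -ltnS ltn_ord.
rewrite mulrDr.
have -> : N%:R * (2 * T%:R / m.+1%:R) = T%:R * (2 * N%:R / m.+1%:R) :> R.
  by ring.
apply: le_trans shift _; rewrite lerD2l.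
rewrite [leRHS]mulr_natl -sumr_const; exact: ler_sum.
Qed.

End ForecastFTPL.

Lemma natr_le_sqrtr (R : rcfType) (a b : nat) :
  (a * a <= b)%N -> a%:R <= Num.sqrt (b%:R : R).
Proof.
move=> le_ab; rewrite -[leLHS]ger0_norm // -sqrtr_sqr.
by rewrite ler_sqrt // -natrX ler_nat.
Qed.

Lemma sqrtr_le_natr (R : rcfType) (a b : nat) :
  (b <= a * a)%N -> Num.sqrt (b%:R : R) <= a%:R.
Proof.
move=> le_ba; rewrite -[leRHS]ger0_norm // -sqrtr_sqr.
by rewrite ler_sqrt ?sqr_ge0 // -natrX ler_nat.
Qed.

Lemma ftpl_rate (R : rcfType) (K T : nat) : (0 < K)%N ->
  2 * T%:R / (sqrtT T).+1%:R + 2 * (K * sqrtT T)%:R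
  <= 4 * K%:R * Num.sqrt (T%:R : R).
Proof.
move=> K_gt0; set m := sqrtT T; set s := Num.sqrt (T%:R : R).
have [le_mT lt_Tm] : (m * m <= T /\ T < m.+1 * m.+1)%N.
  by case: (Nat.sqrt_spec' T) => *; split; [apply/ssrnat.leP|apply/ssrnat.ltP].
have m_le_s : m%:R <= s by apply: natr_le_sqrtr.
have s_le_m1 : s <= m.+1%:R by apply: sqrtr_le_natr; apply: ltnW.
have T_le : T%:R / m.+1%:R <= s.
  rewrite ler_pdivrMr // -[T%:R](@sqr_sqrtr R) ?expr2 ?ler_wpM2l //.
  exact: sqrtr_ge0.
have s_ge0 : 0 <= s by apply: sqrtr_ge0.
have Km_le : K%:R * m%:R <= K%:R * s by rewrite ler_wpM2l.
have s_le_Ks : s <= K%:R * s by rewrite ler_peMl // ler1n.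
have -> : 4 * K%:R * s = 2 * (K%:R * s) + 2 * (K%:R * s) :> R by ring.
rewrite natrM -mulrA.
by apply: lerD; rewrite ler_pM2l //; apply: le_trans T_le s_le_Ks.
Qed.

Theorem theorem5p9 (R : realType) :
  exists C : R, forall (K T : nat) (x : 'I_T -> 'I_K)
    (l : {ffun 'I_K -> R} -> 'I_K -> R) (p0 : {ffun 'I_K -> R}),
    in_simplex p0 -> bounded_proper l ->
    exp_regret_ftpl p0 l x <= C * K%:R * Num.sqrt (T%:R).
Proof.
exists 4 => K T x l p0 p0_simplex l_bounded_proper.
have [T0|T_gt0] := posnP T.
  subst T; rewrite /exp_regret_ftpl /regret big1 ?mul0r ?sqrtr0 ?mulr0 //.
  by move=> n _; rewrite !big_ord0 subrr.
have K_gt0 : (0 < K)%N := leq_ltn_trans (leq0n _) (ltn_ord (x (Ordinal T_gt0))).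
have N_gt0 : (0 < #|{: noise T K}|)%N.
  by apply/card_gt0P; exists [ffun _ => ord0].
rewrite /exp_regret_ftpl ler_pdivrMr ?ltr0n //.
apply: le_trans (sum_regret_ftpl_le x p0_simplex l_bounded_proper T_gt0) _.
by rewrite [leRHS]mulrC ler_wpM2l // ftpl_rate.
Qed.
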